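(* Let $\boldsymbol\xi_i=(\xi_i^1,\dots,\xi_i^k)\in\mathbb{R}^k$, $i\in\mathbb{Z}$, be independent, identically distributed vectors of (possibly dependent) non-negative random variables, and let $f$ be a directionally convex function on $\mathbb{R}^k$. Define $g$ on $\mathbb{Z}$ by $g(n)=\mathbb{E}f\big(\mathrm{sgn}(n)\sum_{i=1}^{|n|}\boldsymbol\xi_i\big)$ for $n\ne0$ and $g(0)=f(0,\dots,0)$. Then $g$ is convex on $\mathbb{Z}$, i.e. $g(n-1)+g(n+1)-2g(n)\ge0$ for all $n\in\mathbb{Z}$ (whenever the expectations are finite).
   Context: A measurable $f:\mathbb{R}^k\to\mathbb{R}$ is directionally convex if $\Delta^i_\epsilon\Delta^j_\delta f(x)\ge0$ for all $x\in\mathbb{R}^k$, $\epsilon,\delta>0$, $i,j\in\{1,\dots,k\}$, where $\Delta^i_\epsilon f(x)=f(x+\epsilon e_i)-f(x)$ and $e_i$ are the canonical basis vectors. $\mathrm{sgn}(n)=n/|n|$ for $n\ne0$. *)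

From HB Require Import structures.
From mathcomp Require Import all_boot all_order all_algebra.
From mathcomp Require Import all_classical all_reals all_analysis.
Set Implicit Arguments. Unset Strict Implicit. Unset Printing Implicit Defensive.
Import Order.TTheory GRing.Theory Num.Theory.
Local Open Scope classical_set_scope.
Local Open Scope ring_scope.

(* R^k is represented by k.-tuple R, equipped (by MathComp-Analysis) with the
   product (Borel) sigma-algebra generated by the coordinate projections. *)

Definition shift (R : realType) (k : nat) (x : k.-tuple R) (i : 'I_k) (eps : R)
  : k.-tuple R :=
  [tuple (tnth x j + (if j == i then eps else 0)) | j < k].

Definition Delta (R : realType) (k : nat) (i : 'I_k) (eps : R)
  (f : k.-tuple R -> R) : k.-tuple R -> R :=
  fun x => f (shift x i eps) - f x.

Definition directionally_convex (R : realType) (k : nat) (f : k.-tuple R -> R) :=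
  measurable_fun [set: k.-tuple R] f /\
  forall (x : k.-tuple R) (eps delta : R) (i j : 'I_k),
    0 < eps -> 0 < delta -> 0 <= Delta i eps (Delta j delta f) x.

Definition vzero (R : realType) (k : nat) : k.-tuple R := [tuple 0 | _ < k].

Definition signed_sum (R : realType) (k : nat) (T : Type)
  (xi : int -> T -> k.-tuple R) (n : int) : T -> k.-tuple R :=
  fun w => [tuple ((Num.sg n)%:~R *
                   \sum_(1 <= i < (`|n|%N).+1) tnth (xi (Posz i) w) j) | j < k].

Definition gfun d (T : measurableType d) (R : realType) (P : probability T R)
  (k : nat) (xi : int -> T -> k.-tuple R) (f : k.-tuple R -> R) (n : int) : R :=
  if n == 0 then f (vzero R k)
  else fine ('E_P[f \o signed_sum xi n])%E.

Definition mutually_independent d (T : measurableType d) (R : realType)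
  (P : probability T R) (k : nat) (xi : int -> T -> k.-tuple R) :=
  forall (J : seq int) (B : int -> set (k.-tuple R)),
    uniq J -> (forall j, j \in J -> measurable (B j)) ->
    P (\bigcap_(j in [set` J]) (xi j @^-1` B j)) =
    (\prod_(j <- J) P (xi j @^-1` B j))%E.

Definition identically_distributed d (T : measurableType d) (R : realType)
  (P : probability T R) (k : nat) (xi : int -> T -> k.-tuple R) :=
  forall (i j : int) (B : set (k.-tuple R)), measurable B ->
    P (xi i @^-1` B) = P (xi j @^-1` B).

From Pilot Require Import Defs.
From HB Require Import structures.
From mathcomp Require Import all_boot all_order all_algebra.
From mathcomp Require Import all_classical all_reals all_analysis.
From mathcomp Require Import ring lra zify measurable_realfun.
Import Order.TTheory GRing.Theory Num.Theory.
Local Open Scope classical_set_scope.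
Local Open Scope ring_scope.

(* Directional convexity makes f supermodular along the nonnegative orthant:
   f(x + a) + f(x + b) <= f(x) + f(x + a + b) for a, b >= 0.  For n = m + 1 >= 1
   take x = S_m = xi_1 + ... + xi_m, a = xi_(m+1), b = xi_(m+2) and integrate.
   By independence and identical distribution, (xi_1, ..., xi_m, xi_(m+2)) has
   the joint law of (xi_1, ..., xi_(m+1)), so E f(S_m + xi_(m+2)) = g(n), which
   yields g(n - 1) + g(n + 1) >= 2 g(n).  Negative n reduce to this case for
   x |-> f(-x), which is again supermodular, and n = 0 is supermodularity at
   x = -S_1, a = b = S_1. *)

Section TupleVectors.
Context {R : realType} {k : nat}.
Local Notation U := (k.-tuple R).

Definition vadd (x y : U) : U := [tuple tnth x j + tnth y j | j < k].
Definition vopp (x : U) : U := [tuple - tnth x j | j < k].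
Definition vnonneg (a : U) := forall j, 0 <= tnth a j.

Definition supermodular (h : U -> R) := forall x a b, vnonneg a -> vnonneg b ->
  h (vadd x a) + h (vadd x b) <= h x + h (vadd (vadd x a) b).

Lemma vaddC (x y : U) : vadd x y = vadd y x.
Proof. by apply: eq_from_tnth => j; rewrite !tnth_mktuple addrC. Qed.

Lemma vaddA (x y z : U) : vadd (vadd x y) z = vadd x (vadd y z).
Proof. by apply: eq_from_tnth => j; rewrite !tnth_mktuple addrA. Qed.

Lemma vadd0r (x : U) : vadd (vzero R k) x = x.
Proof. by apply: eq_from_tnth => j; rewrite !tnth_mktuple add0r. Qed.

Lemma vaddNr (x : U) : vadd (vopp x) x = vzero R k.
Proof. by apply: eq_from_tnth => j; rewrite !tnth_mktuple addNr. Qed.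

Lemma vopp0 : vopp (vzero R k) = vzero R k.
Proof. by apply: eq_from_tnth => j; rewrite !tnth_mktuple oppr0. Qed.

Lemma shift0 (x : U) i : Defs.shift x i 0 = x.
Proof. by apply: eq_from_tnth => j; rewrite tnth_mktuple if_same addr0. Qed.

Lemma shift_vadd (x a : U) i eps :
  Defs.shift (vadd x a) i eps = vadd (Defs.shift x i eps) a.
Proof. by apply: eq_from_tnth => j; rewrite !tnth_mktuple addrAC. Qed.

Lemma le_vadd_of_shift (h : U -> R) :
  (forall x i eps, 0 < eps -> h x <= h (Defs.shift x i eps)) ->
  forall x a, vnonneg a -> h x <= h (vadd x a).
Proof.
move=> h_shift x a a_ge0.
have h_shift_ge0 y i : h y <= h (Defs.shift y i (tnth a i)).
  have [->|a_neq0] := eqVneq (tnth a i) 0; first by rewrite shift0.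
  by apply: h_shift; rewrite lt_def a_neq0 a_ge0.
pose prefix (p : nat) : U := [tuple if (j < p)%N then tnth a j else 0 | j < k].
suff: forall p, (p <= k)%N -> h x <= h (vadd x (prefix p)).
  by move/(_ k (leqnn k)); congr (_ <= h _); apply: eq_from_tnth => j;
    rewrite !tnth_mktuple ltn_ord.
elim=> [_|p IH lt_pk].
  have -> : vadd x (prefix 0) = x.
    by apply: eq_from_tnth => j; rewrite !tnth_mktuple addr0.
  exact: lexx.
apply: (le_trans (IH (ltnW lt_pk))).
set i := Ordinal lt_pk.
suff -> : vadd x (prefix p.+1) = Defs.shift (vadd x (prefix p)) i (tnth a i) by [].
apply: eq_from_tnth => j; rewrite !tnth_mktuple -addrA -[j == i]/(j == p :> nat).
case: (ltngtP j p) => [jp|pj|jp]; rewrite ?addr0.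
- by rewrite ltnS (ltnW jp).
- by rewrite ltnS leqNgt pj addr0.
- by rewrite ltnS jp leqnn add0r; congr (_ + tnth a _); exact: val_inj.
Qed.

Lemma dc_supermodular (f : U -> R) : directionally_convex f -> supermodular f.
Proof.
move=> [_ f_dc] x a b a_ge0 b_ge0.
have Delta_mono i eps y : 0 < eps -> Delta i eps f y <= Delta i eps f (vadd y a).
  move=> eps_gt0; apply: le_vadd_of_shift => // z j delta delta_gt0.
  by rewrite -subr_ge0; exact: f_dc.
have : f (vadd x a) - f x <= f (vadd (vadd x b) a) - f (vadd x b).
  apply: (le_vadd_of_shift (fun y => f (vadd y a) - f y)) => // y i eps eps_gt0.
  by have := Delta_mono i eps y eps_gt0; rewrite /Delta shift_vadd; lra.
rewrite vaddA (vaddC b) -vaddA; lra.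
Qed.

Lemma supermodular_vopp (h : U -> R) : supermodular h -> supermodular (h \o vopp).
Proof.
move=> h_sm x a b a_ge0 b_ge0 /=.
set y := vopp (vadd (vadd x a) b).
have -> : vopp x = vadd (vadd y a) b.
  by apply: eq_from_tnth => j; rewrite !tnth_mktuple; ring.
have -> : vopp (vadd x a) = vadd y b.
  by apply: eq_from_tnth => j; rewrite !tnth_mktuple; ring.
have -> : vopp (vadd x b) = vadd y a.
  by apply: eq_from_tnth => j; rewrite !tnth_mktuple; ring.
by rewrite addrC [leRHS]addrC; exact: h_sm.
Qed.

Definition vsum {N} (t : N.-tuple U) : U :=
  [tuple \sum_(i < N) tnth (tnth t i) j | j < k].

Lemma measurable_vsum N : measurable_fun [set: N.-tuple U] vsum.
Proof.
apply/measurable_fun_tnthP => j.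
rewrite (_ : _ \o _ = fun t : N.-tuple U => \sum_(i < N) tnth (tnth t i) j).
  apply: measurable_sum => i.
  exact: measurableT_comp (measurable_tnth j) (measurable_tnth i).
by apply: funext => t /=; rewrite tnth_mktuple.
Qed.

Lemma measurable_vopp : measurable_fun [set: U] vopp.
Proof.
apply/measurable_fun_tnthP => j.
rewrite (_ : _ \o _ = -%R \o (fun t : U => tnth t j)); last first.
  by apply: funext => t /=; rewrite tnth_mktuple.
exact: measurableT_comp (measurable_tnth j).
Qed.

End TupleVectors.

Section JointLaw.
Context {d} {T : measurableType d} {R : realType} (P : probability T R) {k : nat}
  (xi : int -> T -> k.-tuple R).
Local Notation U := (k.-tuple R).
Hypothesis measurable_xi : forall i, measurable_fun [set: T] (xi i).
Hypothesis xi_indep : mutually_independent P xi.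
Hypothesis xi_ident : identically_distributed P xi.

Definition joint {N} (idx : 'I_N -> int) (w : T) : N.-tuple U :=
  [tuple xi (idx i) w | i < N].

Lemma measurable_joint {N} (idx : 'I_N -> int) : measurable_fun [set: T] (joint idx).
Proof.
apply/measurable_fun_tnthP => i.
rewrite (_ : _ \o _ = xi (idx i)); first exact: measurable_xi.
by apply: funext => w /=; rewrite tnth_mktuple.
Qed.

Definition joint_mfun {N} (idx : 'I_N -> int) : {mfun T >-> N.-tuple U} :=
  HB.pack (joint idx) (isMeasurableFun.Build _ _ _ _ _ (measurable_joint idx)).

Definition box {N} (B : 'I_N -> set U) : set (N.-tuple U) :=
  [set t | forall i, B i (tnth t i)].

Definition measurable_boxes N : set (set (N.-tuple U)) :=
  [set A | exists2 B : 'I_N -> set U, (forall i, measurable (B i)) & A = box B].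

Lemma measurable_box {N} (B : 'I_N -> set U) : (forall i, measurable (B i)) ->
  measurable (box B).
Proof.
move=> mB.
have -> : box B =
    \bigcap_(i in [set: 'I_N]) ((fun t : N.-tuple U => tnth t i) @^-1` B i).
  by apply/seteqP; split => t /= Bt i; [move=> _|]; exact: Bt.
apply: fin_bigcap_measurable; first exact: finite_finset.
by move=> i _; rewrite -[X in measurable X]setTI; exact: measurable_tnth.
Qed.

Lemma measurable_boxes_generate N :
  @measurable _ (N.-tuple U) = <<s measurable_boxes N >>.
Proof.
apply/seteqP; split; last first.
  apply: smallest_sub; first exact: sigma_algebra_measurable.
  by move=> _ [B mB ->]; exact: measurable_box.
apply: smallest_sub; first exact: smallest_sigma_algebra.
rewrite -bigcup_seq => _ [i _ [Y mY <-]].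
apply: sub_sigma_algebra; exists (fun j => if j == i then Y else setT).
  by move=> j; case: ifP.
apply/seteqP; split => t /=.
  by move=> [_ tY] j; case: eqP => [->|].
by move=> Bt; split => //; have := Bt i; rewrite eqxx.
Qed.

Lemma setI_closed_measurable_boxes N : setI_closed (measurable_boxes N).
Proof.
move=> _ _ [B1 mB1 ->] [B2 mB2 ->]; exists (fun i => B1 i `&` B2 i).
  by move=> i; exact: measurableI.
by apply/seteqP; split => t /=; [move=> [B1t B2t] i|move=> Bt; split => i;
  have [] := Bt i].
Qed.

Lemma probability_joint_box {N} (idx : 'I_N -> int) (B : 'I_N -> set U) :
  injective idx -> (forall i, measurable (B i)) ->
  P (joint idx @^-1` box B) = (\prod_(i <- enum 'I_N) P (xi 0 @^-1` B i))%E.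
Proof.
move=> idx_inj mB.
pose B' (j : int) := if [pick i | idx i == j] is Some i then B i else setT.
have B'E i : B' (idx i) = B i.
  by rewrite /B'; case: pickP => [i' /eqP /idx_inj -> //|/(_ i)]; rewrite eqxx.
have -> : joint idx @^-1` box B =
    \bigcap_(j in [set` map idx (enum 'I_N)]) (xi j @^-1` B' j).
  apply/seteqP; split => w /=.
    by move=> Bw _ /mapP [i _ ->]; rewrite B'E; have := Bw i; rewrite tnth_mktuple.
  move=> B'w i; rewrite tnth_mktuple -B'E; apply: B'w.
  by apply/mapP; exists i; rewrite ?mem_enum.
rewrite xi_indep; first last.
- by move=> j _; rewrite /B'; case: pickP => // i _; exact: mB.
- by rewrite map_inj_uniq // enum_uniq.
by rewrite big_map; apply: eq_bigr => i _; rewrite B'E; exact: xi_ident.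
Qed.

Section Reindexing.
Context {N : nat} {idx idx' : 'I_N -> int}.
Hypotheses (idx_inj : injective idx) (idx'_inj : injective idx').

(* Independence and identical distribution fix the law of [joint idx] on boxes,
   a pi-system generating the product sigma-algebra. *)
Lemma joint_law_reindex A : measurable A ->
  P (joint idx @^-1` A) = P (joint idx' @^-1` A).
Proof.
apply: (measure_unique (measurable_boxes N) (fun=> setT)
  (measurable_boxes_generate N) (setI_closed_measurable_boxes N) _ _
  (distribution P (joint_mfun idx)) (distribution P (joint_mfun idx'))).
- by move=> _; exists (fun=> setT) => //; apply/seteqP; split => t.
- by apply/seteqP; split => // t _; exists 0%N.
- move=> _ [B mB ->]; rewrite /distribution /pushforward /=.
  by rewrite [LHS]probability_joint_box // [RHS]probability_joint_box.
- by move=> _; rewrite (le_lt_trans (probability_le1 _ measurableT)) ?ltry.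
Qed.

Lemma integrable_joint_reindex (F : N.-tuple U -> R) :
  measurable_fun [set: N.-tuple U] F ->
  P.-integrable [set: T] (EFin \o (F \o joint idx)) ->
  P.-integrable [set: T] (EFin \o (F \o joint idx')).
Proof.
move=> mF /integrableP[_ Fint]; apply/integrableP; split.
  exact/measurable_EFinP/measurableT_comp/measurable_joint.
have m_absF : measurable_fun [set: N.-tuple U] (fun t => `|(F t)%:E|%E).
  exact/measurableT_comp/measurable_EFinP.
have mj := measurable_joint idx; have mj' := measurable_joint idx'.
suff -> : (\int[P]_w `|(EFin \o (F \o joint idx')) w|
          = \int[P]_w `|(EFin \o (F \o joint idx)) w|)%E by [].
transitivity (\int[pushforward P (joint idx')]_t `|(F t)%:E|)%E.
  by rewrite ge0_integral_pushforward.
have law A : measurable A -> A `<=` setT ->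
    pushforward P (joint idx') A = pushforward P (joint idx) A.
  by move=> mA _; rewrite /pushforward joint_law_reindex.
(* the premise of [eq_measure_integral] is closed by [law] through [//] *)
rewrite (eq_measure_integral (pushforward P (joint idx))) //.
by rewrite ge0_integral_pushforward.
Qed.

Lemma integral_joint_reindex (F : N.-tuple U -> R) :
  measurable_fun [set: N.-tuple U] F ->
  P.-integrable [set: T] (EFin \o (F \o joint idx)) ->
  (\int[P]_w (F (joint idx w))%:E = \int[P]_w (F (joint idx' w))%:E)%E.
Proof.
move=> mF Fint.
have mj := measurable_joint idx; have mj' := measurable_joint idx'.
have mEF : measurable_fun [set: N.-tuple U] (EFin \o F) by exact/measurable_EFinP.
have law A : measurable A -> A `<=` setT ->
    pushforward P (joint idx) A = pushforward P (joint idx') A.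
  by move=> mA _; rewrite /pushforward joint_law_reindex.
transitivity (\int[pushforward P (joint idx)]_t (F t)%:E)%E.
  by rewrite integral_pushforward.
rewrite (eq_measure_integral (pushforward P (joint idx'))) //.
by rewrite integral_pushforward //; exact: integrable_joint_reindex.
Qed.

End Reindexing.
End JointLaw.

Section PartialSums.
Context {d} {T : measurableType d} {R : realType} (P : probability T R) {k : nat}
  (xi : int -> T -> k.-tuple R).
Local Notation U := (k.-tuple R).
Hypothesis measurable_xi : forall i, measurable_fun [set: T] (xi i).
Hypothesis xi_indep : mutually_independent P xi.
Hypothesis xi_ident : identically_distributed P xi.
Hypothesis xi_ge0 : forall i w, vnonneg (xi i w).

Local Notation succ p := (fun i : 'I_p => Posz i.+1).

Definition partial_sum (p : nat) (w : T) : U := vsum (joint xi (succ p) w).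

Lemma partial_sumE p w j :
  tnth (partial_sum p w) j = \sum_(i < p) tnth (xi i.+1 w) j.
Proof. by rewrite tnth_mktuple; apply: eq_bigr => i _; rewrite tnth_mktuple. Qed.

Lemma partial_sum0 w : partial_sum 0 w = vzero R k.
Proof. by apply: eq_from_tnth => j; rewrite partial_sumE big_ord0 tnth_mktuple. Qed.

Lemma partial_sumS p w : partial_sum p.+1 w = vadd (partial_sum p w) (xi p.+1 w).
Proof.
by apply: eq_from_tnth => j; rewrite [RHS]tnth_mktuple !partial_sumE big_ord_recr.
Qed.

Lemma vnonneg_partial_sum p w : vnonneg (partial_sum p w).
Proof. by move=> j; rewrite partial_sumE; apply: sumr_ge0 => i _; exact: xi_ge0. Qed.

Lemma signed_sum_Posz p : signed_sum xi (Posz p) = partial_sum p.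
Proof.
apply: funext => w; apply: eq_from_tnth => j; rewrite tnth_mktuple partial_sumE.
case: p => [|p]; first by rewrite big_ord0 sgr0 mul0r.
by rewrite gtr0_sg // mul1r big_add1 big_mkord.
Qed.

Lemma signed_sum_Negz p : signed_sum xi (- Posz p) = vopp \o partial_sum p.
Proof.
apply: funext => w; apply: eq_from_tnth => j.
rewrite /= [LHS]tnth_mktuple [RHS]tnth_mktuple partial_sumE sgrN abszN mulrNz mulNr.
case: p => [|p]; first by rewrite !big_ord0 sgr0 mul0r.
by rewrite gtr0_sg // mul1r big_add1 big_mkord.
Qed.

Lemma integrable_cst_partial_sum0 (h : U -> R) :
  P.-integrable [set: T] (EFin \o (h \o partial_sum 0)).
Proof.
rewrite (_ : h \o partial_sum 0 = cst (h (vzero R k))).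
  exact: finite_measure_integrable_cst.
by apply: funext => w /=; rewrite partial_sum0.
Qed.

Lemma Rintegral_partial_sum0 (h : U -> R) :
  \int[P]_w h (partial_sum 0 w) = h (vzero R k).
Proof.
under eq_Rintegral do rewrite partial_sum0.
by rewrite Rintegral_cst // [X in fine X]probability_setT mulr1.
Qed.

Lemma second_difference_partial_sum (h : U -> R) m :
  supermodular h -> measurable_fun [set: U] h ->
  P.-integrable [set: T] (EFin \o (h \o partial_sum m)) ->
  P.-integrable [set: T] (EFin \o (h \o partial_sum m.+1)) ->
  P.-integrable [set: T] (EFin \o (h \o partial_sum m.+2)) ->
  0 <= \int[P]_w h (partial_sum m w) + \int[P]_w h (partial_sum m.+2 w)
       - 2 * \int[P]_w h (partial_sum m.+1 w).
Proof.
move=> h_sm mh int_m int_m1 int_m2.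
(* the indices 1, ..., m, m + 2, whose partial sum is S_m + xi_(m+2) *)
pose idx (i : 'I_m.+1) := Posz (if i == m :> nat then m.+2 else i.+1).
have succ_inj : injective (succ m.+1) by move=> i j [] /val_inj.
have idx_inj : injective idx.
  move=> i j [] ij; apply: val_inj; move: ij (ltn_ord i) (ltn_ord j) => /=.
  by do 2 case: eqP => ?; lia.
have vsum_idx w : vadd (partial_sum m w) (xi m.+2 w) = vsum (joint xi idx w).
  apply: eq_from_tnth => j; rewrite [LHS]tnth_mktuple partial_sumE [RHS]tnth_mktuple.
  under [RHS]eq_bigr do rewrite tnth_mktuple.
  rewrite [RHS]big_ord_recr /= /idx /= eqxx; congr (_ + _); apply: eq_bigr => i _.
  by rewrite /= (ltn_eqF (ltn_ord i)).
have mhv : measurable_fun [set: m.+1.-tuple U] (h \o vsum).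
  exact: measurableT_comp mh (measurable_vsum _).
have h_idx :
    (fun w => h (vadd (partial_sum m w) (xi m.+2 w))) = (h \o vsum) \o joint xi idx.
  by apply: funext => w /=; rewrite vsum_idx.
have int_idx :
    P.-integrable [set: T] (EFin \o (fun w => h (vadd (partial_sum m w) (xi m.+2 w)))).
  rewrite h_idx.
  exact: (integrable_joint_reindex P xi measurable_xi xi_indep xi_ident succ_inj idx_inj
    (h \o vsum) mhv int_m1).
have swap : \int[P]_w h (partial_sum m.+1 w)
           = \int[P]_w h (vadd (partial_sum m w) (xi m.+2 w)).
  under [RHS]eq_Rintegral do rewrite vsum_idx.
  rewrite /Rintegral; congr fine.
  exact: (integral_joint_reindex P xi measurable_xi xi_indep xi_ident succ_inj idx_inj
    (h \o vsum) mhv int_m1).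
have key : \int[P]_w (h (partial_sum m.+1 w) + h (vadd (partial_sum m w) (xi m.+2 w)))
           <= \int[P]_w (h (partial_sum m w) + h (partial_sum m.+2 w)).
  apply: le_Rintegral => //.
  - exact: integrableD int_m1 int_idx.
  - exact: integrableD int_m int_m2.
  - by move=> w _; rewrite !partial_sumS; exact: h_sm.
rewrite !RintegralD // -swap in key; lra.
Qed.

Lemma second_difference_partial_sum_at0 (h : U -> R) :
  supermodular h ->
  P.-integrable [set: T] (EFin \o (h \o partial_sum 1)) ->
  P.-integrable [set: T] (EFin \o ((h \o vopp) \o partial_sum 1)) ->
  0 <= \int[P]_w h (vopp (partial_sum 1 w)) + \int[P]_w h (partial_sum 1 w)
       - 2 * h (vzero R k).
Proof.
move=> h_sm int_1 int_opp1.
have key : \int[P]_w (2 * h (vzero R k))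
           <= \int[P]_w (h (vopp (partial_sum 1 w)) + h (partial_sum 1 w)).
  apply: le_Rintegral => //.
  - exact: finite_measure_integrable_cst.
  - exact: integrableD int_opp1 int_1.
  - move=> w _; set x := partial_sum 1 w.
    have := h_sm (vopp x) x x (vnonneg_partial_sum 1 w) (vnonneg_partial_sum 1 w).
    rewrite vaddNr vadd0r; lra.
rewrite RintegralD // Rintegral_cst // [X in fine X]probability_setT mulr1 in key.
lra.
Qed.

Lemma integrable_comp_partial_sum (h : U -> R) p :
  (Posz p != 0 -> P.-integrable [set: T] (EFin \o (h \o signed_sum xi (Posz p)))) ->
  P.-integrable [set: T] (EFin \o (h \o partial_sum p)).
Proof.
case: p => [_|p /(_ isT)]; first exact: integrable_cst_partial_sum0.
by rewrite signed_sum_Posz.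
Qed.

Lemma integrable_comp_opp_partial_sum (h : U -> R) p :
  (- Posz p != 0 -> P.-integrable [set: T] (EFin \o (h \o signed_sum xi (- Posz p)))) ->
  P.-integrable [set: T] (EFin \o ((h \o vopp) \o partial_sum p)).
Proof.
case: p => [_|p /(_ isT)]; first exact: integrable_cst_partial_sum0.
by rewrite signed_sum_Negz.
Qed.

Lemma gfun_Posz (f : U -> R) p : gfun P xi f (Posz p) = \int[P]_w f (partial_sum p w).
Proof.
case: p => [|p]; first by rewrite /gfun eqxx Rintegral_partial_sum0.
by rewrite /gfun /= signed_sum_Posz unlock.
Qed.

Lemma gfun_Negz (f : U -> R) p :
  gfun P xi f (- Posz p) = \int[P]_w f (vopp (partial_sum p w)).
Proof.
case: p => [|p]; last by rewrite /gfun /= signed_sum_Negz unlock.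
by rewrite /gfun oppr0 eqxx (Rintegral_partial_sum0 (f \o vopp)) /= vopp0.
Qed.

End PartialSums.

Theorem lemmaA1 (d : measure_display) (T : measurableType d) (R : realType)
  (P : probability T R) (k : nat) (xi : int -> T -> k.-tuple R)
  (f : k.-tuple R -> R) :
  (forall i : int, measurable_fun [set: T] (xi i)) ->
  mutually_independent P xi ->
  identically_distributed P xi ->
  (forall (i : int) (w : T) (j : 'I_k), 0 <= tnth (xi i w) j) ->
  directionally_convex f ->
  forall n : int,
    (forall m : int, m \in [:: n - 1; n; n + 1] -> m != 0 ->
       P.-integrable [set: T] (EFin \o (f \o signed_sum xi m))) ->
    0 <= gfun P xi f (n - 1) + gfun P xi f (n + 1) - 2 * gfun P xi f n.
Proof.
move=> measurable_xi xi_indep xi_ident xi_ge0 f_dc n f_int.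
have f_sm : supermodular f by exact: dc_supermodular.
have mf := f_dc.1.
case: n f_int => [[|m]|m] f_int.
- rewrite (_ : 0 - 1 = - Posz 1) // (_ : 0 + 1 = Posz 1) //.
  rewrite gfun_Negz gfun_Posz /gfun eqxx.
  apply: (second_difference_partial_sum_at0 P xi) => //.
  + by apply: integrable_comp_partial_sum => _; apply: f_int.
  + by apply: integrable_comp_opp_partial_sum => _; apply: f_int.
- have -> : Posz m.+1 - 1 = m by lia.
  have -> : Posz m.+1 + 1 = m.+2 by lia.
  rewrite !gfun_Posz; apply: (second_difference_partial_sum P xi) => //;
    apply: integrable_comp_partial_sum => q_neq0; apply: f_int q_neq0;
    rewrite !inE; lia.
- rewrite NegzE in f_int *.
  have -> : - Posz m.+1 - 1 = - Posz m.+2 by lia.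
  have -> : - Posz m.+1 + 1 = - Posz m by lia.
  suff : 0 <= gfun P xi f (- Posz m) + gfun P xi f (- Posz m.+2)
              - 2 * gfun P xi f (- Posz m.+1) by lra.
  rewrite !gfun_Negz.
  apply: (second_difference_partial_sum P xi measurable_xi xi_indep xi_ident xi_ge0
    (f \o vopp) m (supermodular_vopp _ f_sm) (measurableT_comp mf measurable_vopp));
    apply: integrable_comp_opp_partial_sum => q_neq0; apply: f_int q_neq0;
    rewrite !inE; lia.
Qed.
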